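(* Let $\alpha$ be a graph function on a strongly connected digraph $G$. There is a real number $b>-\infty$ such that no finite sequence of balancing operations applied starting from $\alpha$ can produce a graph function having an edge of weight less than $b$.
   Context: $G$ is a strongly connected directed graph (self-loops allowed); a graph function assigns a real weight $\alpha_{uv}$ to each edge. $\alpha_v^{\text{in}}=\max_{u:(u,v)\in G}\alpha_{uv}$, $\alpha_v^{\text{out}}=\max_{w:(v,w)\in G}\alpha_{vw}$. The balancing operation at a vertex $v$ adds $(\alpha_v^{\text{out}}-\alpha_v^{\text{in}})/2$ to each edge weight $\alpha_{uv}$ with $u\ne v$, subtracts the same amount from each $\alpha_{vw}$ with $w\ne v$, and leaves a self-loop at $v$ unchanged. *)

From HB Require Import structures.
From mathcomp Require Import all_boot all_order all_algebra.
From mathcomp Require Import reals.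
Set Implicit Arguments. Unset Strict Implicit. Unset Printing Implicit Defensive.
Import Order.TTheory GRing.Theory Num.Theory.
Local Open Scope ring_scope.

(* A directed graph (self-loops allowed) on a finite vertex type V is given by
   its edge relation E : rel V ((u,v) is an edge iff E u v). *)
Definition strongly_connected (V : finType) (E : rel V) : Prop :=
  forall u v : V, connect E u v.

(* A graph function: a real weight alpha u v for each edge (u,v);
   values off the edge set are irrelevant. *)
Definition graph_fun (R : realType) (V : finType) := V -> V -> R.

(* alpha_v^in = max over in-edges (u,v); alpha_v^out = max over out-edges (v,w).
   (Default 0 if there is no such edge, which never happens in a strongly
   connected graph with an edge.) *)
Definition alpha_in (R : realType) (V : finType) (E : rel V)
    (alpha : graph_fun R V) (v : V) : R :=
  match [pick u | E u v] with
  | Some u0 => \big[Num.max/alpha u0 v]_(u | E u v) alpha u v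
  | None => 0
  end.

Definition alpha_out (R : realType) (V : finType) (E : rel V)
    (alpha : graph_fun R V) (v : V) : R :=
  match [pick w | E v w] with
  | Some w0 => \big[Num.max/alpha v w0]_(w | E v w) alpha v w
  | None => 0
  end.

Definition balance (R : realType) (V : finType) (E : rel V)
    (alpha : graph_fun R V) (v : V) : graph_fun R V :=
  let d := (alpha_out E alpha v - alpha_in E alpha v) / 2 in
  fun x y =>
    if E x y then
      if (y == v) && (x != v) then alpha x y + d
      else if (x == v) && (y != v) then alpha x y - d
      else alpha x y
    else alpha x y.

Definition balance_seq (R : realType) (V : finType) (E : rel V)
    (alpha : graph_fun R V) (s : seq V) : graph_fun R V :=
  foldl (balance E) alpha s.

From HB Require Import structures.
From mathcomp Require Import all_boot all_order all_algebra.
From mathcomp Require Import reals.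
From mathcomp Require Import lra.
Set Implicit Arguments. Unset Strict Implicit. Unset Printing Implicit Defensive.
Import Order.TTheory GRing.Theory Num.Theory.
Local Open Scope ring_scope.

(* A balancing at v raises the edges into v and lowers the edges out of v to
   at most (alpha_v^in + alpha_v^out)/2, so a bound M >= 0 on all edge weights
   survives every balancing.  Each balancing is also a potential shift
   alpha'_{xy} = alpha_{xy} + P y - P x, so closed walks keep their weight.
   Closing an edge (x,y) by a shortest path from y to x (fewer than |V| edges,
   each now of weight at most M) bounds alpha'_{xy} from below. *)

Section Balancing.
Variables (R : realType) (V : finType) (E : rel V).
Implicit Types (a b : graph_fun R V) (M : R).

Definition bounded_above b M := forall x y, E x y -> b x y <= M.

Lemma le_alpha_in b u v : E u v -> b u v <= alpha_in E b v.
Proof.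
move=> Euv; rewrite /alpha_in; case: pickP => [u0 _|/(_ u)]; last by rewrite Euv.
by rewrite (bigD1 u) //= le_max lexx.
Qed.

Lemma le_alpha_out b v w : E v w -> b v w <= alpha_out E b v.
Proof.
move=> Evw; rewrite /alpha_out; case: pickP => [w0 _|/(_ w)]; last by rewrite Evw.
by rewrite (bigD1 w) //= le_max lexx.
Qed.

(* [0 <= M] is needed for the default value 0 at a vertex without in-edges
   (resp. out-edges). *)
Lemma alpha_in_le b v M : 0 <= M -> bounded_above b M -> alpha_in E b v <= M.
Proof.
move=> M0 bM; rewrite /alpha_in; case: pickP => [u0 Eu0|//].
apply: (big_ind (fun x => x <= M)); first exact: bM.
  by move=> c d hc hd; rewrite ge_max hc hd.
by move=> u Eu; apply: bM.
Qed.

Lemma alpha_out_le b v M : 0 <= M -> bounded_above b M -> alpha_out E b v <= M.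
Proof.
move=> M0 bM; rewrite /alpha_out; case: pickP => [w0 Ew0|//].
apply: (big_ind (fun x => x <= M)); first exact: bM.
  by move=> c d hc hd; rewrite ge_max hc hd.
by move=> w Ew; apply: bM.
Qed.

Lemma balance_bounded_above b v M :
  0 <= M -> bounded_above b M -> bounded_above (balance E b v) M.
Proof.
move=> M0 bM x y Exy; rewrite /balance Exy.
have hin := alpha_in_le v M0 bM; have hout := alpha_out_le v M0 bM.
case: (eqVneq y v) => [yv|yv]; case: (eqVneq x v) => [xv|xv] /=.
- exact: bM.
- by subst y; have := le_alpha_in b Exy; lra.
- by subst x; have := le_alpha_out b Exy; lra.
- exact: bM.
Qed.

Lemma balance_seq_bounded_above a s M :
  0 <= M -> bounded_above a M -> bounded_above (balance_seq E a s) M.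
Proof.
move=> M0 aM; elim/last_ind: s => [|s v IHs] //.
by rewrite /balance_seq foldl_rcons; apply: balance_bounded_above.
Qed.

Definition potential_shift a b :=
  exists P : V -> R, forall x y, E x y -> b x y = a x y + P y - P x.

Lemma balance_potential_shift b v : potential_shift b (balance E b v).
Proof.
set d := (alpha_out E b v - alpha_in E b v) / 2.
exists (fun z => if z == v then d else 0) => x y Exy; rewrite /balance -/d Exy.
case: (eqVneq y v) => [->|/negPf yv]; case: (eqVneq x v) => [->|/negPf xv];
  by rewrite /= ?eqxx ?xv ?yv; lra.
Qed.

Lemma potential_shift_trans a b c :
  potential_shift a b -> potential_shift b c -> potential_shift a c.
Proof.
move=> [P abP] [Q bcQ]; exists (fun z => P z + Q z) => x y Exy.
by rewrite bcQ // abP //; lra.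
Qed.

Lemma balance_seq_potential_shift a s : potential_shift a (balance_seq E a s).
Proof.
elim/last_ind: s => [|s v IHs]; first by exists (fun=> 0) => x y _; rewrite addr0 subr0.
rewrite /balance_seq foldl_rcons.
exact: potential_shift_trans IHs (balance_potential_shift _ v).
Qed.

Fixpoint path_weight b (x : V) (p : seq V) : R :=
  if p is y :: p' then b x y + path_weight b y p' else 0.

Lemma path_weight_shift a b (P : V -> R) x p : path E x p ->
  (forall x y, E x y -> b x y = a x y + P y - P x) ->
  path_weight b x p = path_weight a x p + P (last x p) - P x.
Proof.
elim: p x => [|y p IHp] x /=; first by move=> _ _; lra.
by move=> /andP[Exy Ep] abP; rewrite IHp // abP //; lra.
Qed.

Lemma cycle_weight_invariant a b x y p :
  potential_shift a b -> E x y -> path E y p -> last y p = x ->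
  b x y + path_weight b y p = a x y + path_weight a y p.
Proof.
move=> [P abP] Exy Ep px.
by rewrite (path_weight_shift Ep abP) abP // px; lra.
Qed.

Lemma path_weight_le b M x p : path E x p -> bounded_above b M ->
  path_weight b x p <= (size p)%:R * M.
Proof.
elim: p x => [|y p IHp] x /=; first by move=> _ _; lra.
move=> /andP[Exy Ep] bM; have := IHp y Ep bM; have := bM _ _ Exy.
by rewrite -addn1 natrD; lra.
Qed.

Lemma path_weight_ge b M x p : path E x p ->
  (forall x y, E x y -> - M <= b x y) -> - ((size p)%:R * M) <= path_weight b x p.
Proof.
elim: p x => [|y p IHp] x /=; first by move=> _ _; lra.
move=> /andP[Exy Ep] bM; have := IHp y Ep bM; have := bM _ _ Exy.
by rewrite -addn1 natrD; lra.
Qed.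

Lemma connect_short_path x y : connect E x y ->
  exists2 p, path E x p & (last x p = y) /\ (size p < #|V|)%N.
Proof.
move=> /connectP[p0 Ep0 ->]; case: (shortenP Ep0) => p Ep up _.
exists p => //; split=> //.
by have := card_uniqP up; rewrite /= => <-; apply: max_card.
Qed.

End Balancing.

Lemma exists_norm_bound (R : realType) (V : finType) (alpha : graph_fun R V) :
  exists2 M : R, 0 <= M & forall x y, `|alpha x y| <= M.
Proof.
exists (\sum_(q : V * V) `|alpha q.1 q.2|); first exact: sumr_ge0.
by move=> x y; rewrite (bigD1 (x, y)) //= lerDl sumr_ge0.
Qed.

Theorem lemma9 (R : realType) (V : finType) (E : rel V)
    (hE : strongly_connected E) (alpha : graph_fun R V) :
  exists b : R, forall (s : seq V) (x y : V),
    E x y -> b <= balance_seq E alpha s x y.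
Proof.
have [M M0 normM] := exists_norm_bound alpha.
have alphaM : bounded_above E alpha M.
  by move=> x y _; apply: le_trans (normM x y); apply: ler_norm.
have alpha_geM x y : E x y -> - M <= alpha x y.
  by move=> _; have := normM x y; rewrite ler_norml => /andP[].
exists (- M - 2 * (#|V|%:R * M)) => s x y Exy.
set b := balance_seq E alpha s.
have [p Ep [px size_p]] := connect_short_path (hE y x).
have cycle := cycle_weight_invariant (balance_seq_potential_shift E alpha s) Exy Ep px.
have b_le := path_weight_le Ep (balance_seq_bounded_above s M0 alphaM).
have alpha_ge := path_weight_ge Ep alpha_geM.
have sizeM : (size p)%:R * M <= #|V|%:R * M :> R.
  by rewrite ler_wpM2r // ler_nat ltnW.
by have := alpha_geM _ _ Exy; rewrite -/b in cycle b_le; lra.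
Qed.
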